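(* Let $(X,d)$, $(\Lambda,d_\Lambda)$ be compact metric spaces, $\tau:\Lambda\times X\to X$ continuous and $q:X\to\mathcal P(\Lambda)$ continuous. Assume: (W1) each $\tau_\lambda$ is $1$-Lipschitz on $X$; (CP1) there are an integer $M\ge1$ and $0<s<1$ such that $\tau_{\lambda^M}$ is $s$-Lipschitz on $X$ for every $\lambda^M\in\Lambda^M$; (H2) there is $r\ge0$ with $d(\tau(\lambda_1,x),\tau(\lambda_2,x))\le r\,d_\Lambda(\lambda_1,\lambda_2)$ for all $\lambda_1,\lambda_2$, $x$; (H3) there is $t\ge0$ with $d_{MK}(q_x,q_y)\le t\,d(x,y)$ for all $x,y\in X$; (H4) $q_x(A)>0$ for every nonempty open $A\subseteq\Lambda$ and every $x\in X$; and suppose $s+r\,M\,t<1$. Let $A_{\mathcal R}$ be the unique nonempty compact set with $F_{\mathcal R}(A_{\mathcal R})=A_{\mathcal R}$ and $\mu_{\mathcal R}$ the unique probability with $T_q(\mu_{\mathcal R})=\mu_{\mathcal R}$. Then $\operatorname{supp}(\mu_{\mathcal R})=A_{\mathcal R}$.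
   Context: $\mathcal{P}(Y)$ is the set of Borel probability measures on a compact metric space $Y$, with $d_{MK}(\mu,\nu)=\sup_{f\in \mathrm{Lip}_1(Y)}\{\int f\,d\mu-\int f\,d\nu\}$. $\tau_\lambda(x)=\tau(\lambda,x)$; for $\lambda^j=(\lambda_0,\dots,\lambda_{j-1})$, $\tau_{\lambda^j}=\tau_{\lambda_{j-1}}\circ\cdots\circ\tau_{\lambda_0}$. $F_{\mathcal R}(B)=\bigcup_{\lambda\in\Lambda}\tau_\lambda(B)$ on nonempty compact subsets $B$ of $X$. The Markov operator $T_q$ on $\mathcal P(X)$ is defined by $\int_X f\,dT_q(\mu)=\int_X\int_\Lambda f(\tau(\lambda,x))\,dq_x(\lambda)\,d\mu(x)$ for $f\in C(X)$. *)

From HB Require Import structures.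
From mathcomp Require Import all_boot all_order all_algebra.
From mathcomp Require Import all_classical all_reals all_analysis.

Set Implicit Arguments.
Unset Strict Implicit.
Unset Printing Implicit Defensive.

Import Order.TTheory GRing.Theory Num.Theory.
Import numFieldNormedType.Exports.

Local Open Scope classical_set_scope.
Local Open Scope ring_scope.

(* Metric spaces (with distance [mdist]) that carry a point; the compact
   metric spaces of the paper are nonempty. *)
#[short(type="pmetricType")]
HB.structure Definition PointedMetric (K : numDomainType) :=
  { M of Metric K M & isPointed M }.

Definition borel {R : realType} (X : pmetricType R) :=
  g_sigma_algebraType (@open X).

Notation PM R Y := (probability (borel Y) R).

Section defs.
Context {R : realType}.

Definition Lip1 {Y : pmetricType R} (f : Y -> R) : Prop :=
  forall a b : Y, `|f a - f b| <= mdist a b.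

Definition dMK {Y : pmetricType R} (mu nu : PM R Y) : \bar R :=
  ereal_sup [set (\int[mu]_y (f y)%:E - \int[nu]_y (f y)%:E)%E | f in @Lip1 Y].

(* Continuity of x |-> q_x into P(Lambda) with the weak topology. *)
Definition weak_continuous {X L : pmetricType R} (q : X -> PM R L) : Prop :=
  forall f : L -> R, continuous f ->
    continuous (fun x : X => fine (\int[q x]_l (f l)%:E)%E).

Definition msupport {Y : pmetricType R} (mu : PM R Y) : set Y :=
  [set y | forall A : set Y, open A -> A y -> (0 < mu A)%E].

(* tau_{lambda^j} = tau_{lambda_{j-1}} o ... o tau_{lambda_0} *)
Definition tau_seq {L X : Type} (tau : L -> X -> X) (l : seq L) (x : X) : X :=
  foldl (fun y a => tau a y) x l.

Definition F_R {L X : Type} (tau : L -> X -> X) (B : set X) : set X :=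
  \bigcup_(l in [set: L]) (tau l @` B).

(* mu is a fixed point of the Markov operator T_q:
   int f dT_q(mu) = int_X int_Lambda f(tau(lambda,x)) dq_x(lambda) dmu(x),
   for all f in C(X). *)
Definition Tq_invariant {X L : pmetricType R} (tau : L -> X -> X)
    (q : X -> PM R L) (mu : PM R X) : Prop :=
  forall f : X -> R, continuous f ->
    (\int[mu]_x (f x)%:E = \int[mu]_x (\int[q x]_l (f (tau l x))%:E))%E.

End defs.

(* Let Uq g x := \int g (tau l x) dq_x(l) be the operator dual to T_q.  By
   (W1), (H2) and (H3) it maps bounded Lipschitz functions to bounded Lipschitz
   functions, so invariance of mu gives \int g dmu = \int Uq^k g dmu for them.
   - supp mu <= A_R: since A_R is invariant, (CP1) makes Uq^M multiply the
     distance to A_R by at most s < 1, so the mean distance to A_R vanishes.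
   - A_R <= supp mu: by (H4) and (H2), testing Uq against a tent function
     shows that supp mu is invariant under every tau_l; it is nonempty, and
     every point of A_R is tau_(l^(NM)) a' for some a' in A_R, while
     tau_(l^(NM)) shrinks the whole space to diameter s^N diam X. *)

From HB Require Import structures.
From mathcomp Require Import all_boot all_order all_algebra.
From mathcomp Require Import all_classical all_reals all_analysis.
From mathcomp Require Import measurable_realfun lra.
Set Implicit Arguments.
Unset Strict Implicit.
Unset Printing Implicit Defensive.

Import Order.TTheory GRing.Theory Num.Theory.
Import numFieldNormedType.Exports.
Local Open Scope classical_set_scope.
Local Open Scope ring_scope.

Section metric.
Context {R : realType} {Y : pmetricType R}.
Implicit Types (g : Y -> R) (c : R).

Lemma lipschitz_continuous g c :
  (forall x y, `|g x - g y| <= c * mdist x y) -> continuous g.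
Proof.
move=> gc x; apply/cvgrPdist_lt => e e0.
have c1 : 0 < `|c| + 1 by rewrite ltr_wpDl.
apply: filterS (nbhsx_ballx x (e / (`|c| + 1)) _); last by rewrite divr_gt0.
move=> y; rewrite ballEmdist /= => xy.
apply: le_lt_trans (gc x y) _; apply: (le_lt_trans (y := (`|c| + 1) * mdist x y)).
  by rewrite ler_wpM2r ?mdist_ge0 // (le_trans (ler_norm c)) // lerDl.
by rewrite -ltr_pdivlMl // mulrC.
Qed.

Lemma lipschitz_of_le g c : (forall x y, g x <= g y + c * mdist x y) ->
  forall x y, `|g x - g y| <= c * mdist x y.
Proof.
move=> gc x y; rewrite ler_norml; have := gc x y; have := gc y x.
by rewrite metric_sym; lra.
Qed.

Lemma open_measurable_borel (U : set Y) : open U -> measurable (U : set (borel Y)).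
Proof. exact: sub_sigma_algebra. Qed.

Lemma continuous_measurable g : continuous g ->
  measurable_fun (setT : set (borel Y)) g.
Proof.
move=> cg; apply: (measurability (RGenOpens.G (R:=R))).
  exact: RGenOpens.measurableE.
move=> _ [_ [x [y ->]] <-]; apply: open_measurable_borel; rewrite setTI.
by apply: open_comp; [move=> z _; exact: cg | exact: itv_open].
Qed.

Lemma compact_mdist_bounded : compact [set: Y] ->
  exists D, forall x y : Y, mdist x y <= D.
Proof.
move=> cY.
have cf : continuous (mdist (point : Y)).
  apply: (@lipschitz_continuous _ 1); apply: lipschitz_of_le => x y.
  by rewrite mul1r [mdist x y]metric_sym metric_triangle.
have [B [_ HB]] := compact_bounded (continuous_compact (continuous_subspaceT cf) cY).
have hb (z : Y) : mdist point z <= `|B| + 1.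
  apply: le_trans (ler_norm _) _; apply: HB (ltr_pwDr ltr01 (ler_norm B)) _ _.
  by exists z.
exists (2 * (`|B| + 1)) => x y; apply: le_trans (metric_triangle x point y) _.
by rewrite metric_sym mulr2n mulrDl mul1r lerD.
Qed.

End metric.

Section probability_Rintegral.
Context {R : realType} {d : measure_display} {T : measurableType d}
  (P : probability T R).
Implicit Types (h : T -> R) (B : set T).

Lemma bounded_integrable h K : measurable_fun setT h ->
  (forall x, `|h x| <= K) -> P.-integrable setT (EFin \o h).
Proof.
move=> mh hK; apply: measurable_bounded_integrable => //.
  by move: (probability_setT P) => /= ->; rewrite ltry.
by exists K; split=> [|M /ltW KM x _]; [exact: num_real | exact: le_trans (hK x) KM].
Qed.

Lemma EFin_Rintegral h : P.-integrable setT (EFin \o h) ->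
  (\int[P]_x h x)%:E = (\int[P]_x (h x)%:E)%E.
Proof. by move=> ih; rewrite fineK //; exact: integrable_fin_num. Qed.

Lemma Rintegral_le_cst h K : P.-integrable setT (EFin \o h) ->
  (forall x, h x <= K) -> \int[P]_x h x <= K.
Proof.
move=> ih hK; rewrite -[leRHS]mulr1 -[1]/(fine 1%E) -(probability_setT P).
rewrite -Rintegral_cst //; apply: le_Rintegral => //.
exact: finite_measure_integrable_cst.
Qed.

Lemma integrable_EFinZl h c : P.-integrable setT (EFin \o h) ->
  P.-integrable setT (EFin \o (fun x => c * h x)).
Proof.
move=> ih; apply: eq_integrable measurableT _ _ _ (integrableZl measurableT c ih).
by move=> x _ /=; rewrite EFinM.
Qed.

Let integrable_indicZ B c : measurable B ->
  P.-integrable setT (EFin \o (fun x => c * \1_B x)).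
Proof. by move=> mB; apply: integrable_EFinZl; exact: integrable_indic. Qed.

Lemma normr_Rintegral_le h K : P.-integrable setT (EFin \o h) ->
  (forall x, `|h x| <= K) -> `|\int[P]_x h x| <= K.
Proof.
move=> ih hK; apply: le_trans (le_normr_Rintegral _ ih) (Rintegral_le_cst _ hK) => //.
exact: integrable_norm.
Qed.

Lemma Rintegral_indicZ B c : measurable B ->
  \int[P]_x (c * \1_B x) = c * fine (P B).
Proof.
move=> mB; rewrite RintegralZl //; last exact: integrable_indic.
by rewrite /Rintegral integral_indic // setIT.
Qed.

Lemma Rintegral_ge_indicZ h B c : measurable B -> P.-integrable setT (EFin \o h) ->
  (forall x, c * \1_B x <= h x) -> c * fine (P B) <= \int[P]_x h x.
Proof.
move=> mB ih hB; rewrite -Rintegral_indicZ //; apply: le_Rintegral => //.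
exact: integrable_indicZ.
Qed.

Lemma Rintegral_le_indicZ h B c : measurable B -> P.-integrable setT (EFin \o h) ->
  (forall x, h x <= c * \1_B x) -> \int[P]_x h x <= c * fine (P B).
Proof.
move=> mB ih hB; rewrite -Rintegral_indicZ //; apply: le_Rintegral => //.
exact: integrable_indicZ.
Qed.

Lemma fine_probability_gt0 B : measurable B -> (0 < P B)%E -> 0 < fine (P B).
Proof.
move=> mB PB; apply: fine_gt0; rewrite PB /=.
exact: le_lt_trans (probability_le1 P mB) (ltry _).
Qed.

End probability_Rintegral.

Section bounded_lipschitz.
Context {R : realType} {Y : pmetricType R}.
Implicit Types (g : Y -> R) (mu nu : PM R Y).

Definition bounded_lipschitz g := exists c K, 0 <= c /\
  (forall y, `|g y| <= K) /\ (forall x y, `|g x - g y| <= c * mdist x y).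

Lemma bounded_lipschitz_continuous g : bounded_lipschitz g -> continuous g.
Proof. by case=> c [K [_ [_ gc]]]; exact: lipschitz_continuous gc. Qed.

Lemma bounded_lipschitz_integrable mu g : bounded_lipschitz g ->
  mu.-integrable setT (EFin \o g).
Proof.
move=> gL; have [c [K [_ [gK _]]]] := gL.
apply: (@bounded_integrable _ _ _ mu g K) => //.
exact: continuous_measurable (bounded_lipschitz_continuous gL).
Qed.

Definition bump (y : Y) (e : R) (z : Y) : R := Num.max 0 (e - mdist y z).

Lemma bump_ge0 y e z : 0 <= bump y e z.
Proof. by rewrite le_max lexx. Qed.

Lemma bump_center y e : 0 <= e -> bump y e y = e.
Proof. by move=> e0; rewrite /bump mdistxx subr0 max_r. Qed.

Lemma bump_bounded_lipschitz y e : bounded_lipschitz (bump y e).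
Proof.
exists 1, `|e|; split=> //; split=> [z|].
  rewrite ger0_norm ?bump_ge0 // ge_max normr_ge0 /=.
  by rewrite (le_trans _ (ler_norm e)) // gerBl mdist_ge0.
apply: lipschitz_of_le => a b; rewrite mul1r ge_max addr_ge0 ?bump_ge0 ?mdist_ge0 //=.
have : e - mdist y b <= bump y e b by rewrite le_max lexx orbT.
by have := metric_triangle y a b; lra.
Qed.

Lemma bump_le_indic y e (U : set Y) z : 0 <= e ->
  [set w | mdist y w < e] `<=` U -> bump y e z <= e * \1_U z.
Proof.
move=> e0 ballU; rewrite indicE; case: (boolP (z \in U)) => [_|/negP Uz].
  by rewrite mulr1 ge_max e0 gerBl mdist_ge0.
rewrite mulr0 ge_max lexx subr_le0 leNgt; apply/negP => yz.
by apply: Uz; rewrite inE; exact: ballU.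
Qed.

Lemma msupport_Rintegral_gt0 mu g y : continuous g ->
  mu.-integrable setT (EFin \o g) -> (forall z, 0 <= g z) ->
  msupport mu y -> 0 < g y -> 0 < \int[mu]_z g z.
Proof.
move=> cg ig g0 suppy gy0.
pose B := g @^-1` [set a | a > g y / 2].
have oB : open B by apply: open_comp; [move=> z _; exact: cg | exact: open_gt].
have By : B y by rewrite /B /= ltr_pdivrMr // ltr_pMr // ltr1n.
have mB := open_measurable_borel oB.
apply: (lt_le_trans _ (Rintegral_ge_indicZ (c := g y / 2) mB ig _)).
  by rewrite mulr_gt0 ?divr_gt0 // fine_probability_gt0 // suppy.
move=> z; rewrite indicE; case: (boolP (z \in B)) => [/set_mem|_].
  by rewrite mulr1 => /ltW.
by rewrite mulr0 g0.
Qed.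

Lemma Rintegral_sub_le_dMK mu nu (f : Y -> R) c e : 0 < c ->
  (forall a b, `|f a - f b| <= c * mdist a b) ->
  mu.-integrable setT (EFin \o f) -> nu.-integrable setT (EFin \o f) ->
  (dMK mu nu <= e%:E)%E -> \int[mu]_y f y - \int[nu]_y f y <= c * e.
Proof.
move=> c0 fc imu inu.
pose v y := c^-1 * f y.
have v1 : Lip1 v.
  move=> a b; rewrite /v -mulrBr normrM gtr0_norm ?invr_gt0 //.
  by rewrite ler_pdivrMl.
move=> /(le_trans (ereal_sup_ubound (ex_intro2 _ _ v v1 erefl))).
rewrite -!EFin_Rintegral ?integrable_EFinZl // -EFinB lee_fin /v !RintegralZl // -mulrBr.
by rewrite ler_pdivrMl.
Qed.

Lemma msupport_nonempty mu : compact [set: Y] -> msupport mu !=set0.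
Proof.
move=> cY; apply: contrapT => supp0.
have null y : exists U : set Y, open U /\ U y /\ mu U = 0%E.
  have /existsNP [U /not_implyP [oU /not_implyP [Uy /negP]]] : ~ msupport mu y.
    by move=> suppy; apply: supp0; exists y.
  by rewrite lt0e measure_ge0 andbT negbK => /eqP mU0; exists U.
have [U hU] := choice null.
move: cY; rewrite compact_cover => /(_ Y setT U) [].
- by move=> y _; case: (hU y).
- by move=> y _; exists y => //; case: (hU y) => _ [].
move=> D _ cover.
have := content_sub_fsum mu (finite_fset D)
  (fun y _ => open_measurable_borel (hU y).1) measurableT cover.
rewrite fsbig1; last by move=> y _; case: (hU y) => _ [].
by move: (probability_setT mu) => /= ->; rewrite lee_fin ler10.
Qed.

End bounded_lipschitz.

Section iterated_maps.
Context {R : realType} {X L : pmetricType R} (tau : L -> X -> X).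

Lemma tau_seq_cat l1 l2 x :
  tau_seq tau (l1 ++ l2) x = tau_seq tau l2 (tau_seq tau l1 x).
Proof. exact: foldl_cat. Qed.

Lemma tau_seq_contraction (M : nat) (s : R) : 0 <= s ->
  (forall l x y, size l = M ->
     mdist (tau_seq tau l x) (tau_seq tau l y) <= s * mdist x y) ->
  forall k l x y, size l = (k * M)%N ->
    mdist (tau_seq tau l x) (tau_seq tau l y) <= s ^+ k * mdist x y.
Proof.
move=> s0 contrM; elim=> [|k IH] l x y.
  by rewrite mul0n => /size0nil ->; rewrite expr0 mul1r.
rewrite mulSn => sl; rewrite -(cat_take_drop M l) !tau_seq_cat.
have sM : size (take M l) = M by rewrite size_takel // sl leq_addr.
have skM : size (drop M l) = (k * M)%N by rewrite size_drop sl addKn.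
apply: le_trans (IH _ _ _ skM) _.
by rewrite exprSr -mulrA ler_wpM2l ?exprn_ge0 // contrM.
Qed.

Variable A : set X.
Hypothesis FA : F_R tau A = A.

Lemma F_R_fixed_tau_seq l a : A a -> A (tau_seq tau l a).
Proof.
elim: l a => [//|l0 l IH] a Aa; apply: IH.
by rewrite -FA; exists l0 => //; exists a.
Qed.

Lemma F_R_fixed_preimage n a : A a ->
  exists l a', [/\ size l = n, A a' & tau_seq tau l a' = a].
Proof.
elim: n a => [|n IH] a Aa; first by exists [::], a.
have [l [a' [sl Aa' <-]]] := IH a Aa.
have : F_R tau A a' by rewrite FA.
case=> l0 _ [a'' Aa'' <-].
by exists (l0 :: l), a''; split; rewrite //= sl.
Qed.

End iterated_maps.

Section distance_to_set.
Context {R : realType} {X : pmetricType R} (A : set X).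
Hypothesis An : A !=set0.

Definition dist_set (x : X) : R := inf [set mdist x a | a in A].

Lemma dist_set_le x a : A a -> dist_set x <= mdist x a.
Proof.
move=> Aa; apply: ge_inf; last by exists a.
by exists 0 => _ [b _ <-]; exact: mdist_ge0.
Qed.

Lemma dist_set_ge x m : (forall a, A a -> m <= mdist x a) -> m <= dist_set x.
Proof.
move=> mA; apply: lb_le_inf; first by case: An => a Aa; exists (mdist x a), a.
by move=> _ [a Aa <-]; exact: mA.
Qed.

Lemma dist_set_ge0 x : 0 <= dist_set x.
Proof. by apply: dist_set_ge => a _; exact: mdist_ge0. Qed.

Lemma dist_set_bounded_lipschitz D : (forall x y : X, mdist x y <= D) ->
  bounded_lipschitz dist_set.
Proof.
move=> XD; exists 1, D; split=> //; split=> [x|].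
  have [a Aa] := An; rewrite ger0_norm ?dist_set_ge0 //.
  exact: le_trans (dist_set_le x Aa) (XD _ _).
apply: lipschitz_of_le => x y; rewrite mul1r -lerBlDr.
apply: dist_set_ge => a Aa; rewrite lerBlDr.
by apply: le_trans (dist_set_le x Aa) _; rewrite addrC metric_triangle.
Qed.

Lemma closed_dist_set_eq0 x : closed A -> dist_set x = 0 -> A x.
Proof.
move=> cA dx0; apply: contrapT => nAx.
have : open (~` A) by rewrite openC.
rewrite openE => /(_ x nAx) /nbhs_ballP [e /= e0 eA].
have : e <= dist_set x.
  apply: dist_set_ge => a Aa; rewrite leNgt; apply/negP => xa.
  by apply: (eA a) => //; rewrite ballEmdist.
by rewrite dx0 leNgt e0.
Qed.

Lemma dist_set_contraction (f : X -> X) s x : 0 < s ->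
  (forall a, A a -> A (f a)) -> (forall x y, mdist (f x) (f y) <= s * mdist x y) ->
  dist_set (f x) <= s * dist_set x.
Proof.
move=> s0 fA fs; rewrite mulrC -ler_pdivrMr //; apply: dist_set_ge => a Aa.
rewrite ler_pdivrMr // mulrC.
exact: le_trans (dist_set_le _ (fA a Aa)) (fs x a).
Qed.

End distance_to_set.

Section dual_Markov_operator.
Context {R : realType} {X L : pmetricType R} (tau : L -> X -> X)
  (q : X -> PM R L) (r t : R).
Hypotheses (r0 : 0 <= r) (t0 : 0 <= t)
  (tau_nonexpansive : forall l x y, mdist (tau l x) (tau l y) <= mdist x y)
  (tau_lipschitzL : forall l1 l2 x, mdist (tau l1 x) (tau l2 x) <= r * mdist l1 l2)
  (q_lipschitz : forall x y, (dMK (q x) (q y) <= (t * mdist x y)%:E)%E).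
Implicit Types (g : X -> R) (mu : PM R X).

Definition Uq g x : R := \int[q x]_l g (tau l x).

Lemma bounded_lipschitz_tau g x : bounded_lipschitz g ->
  bounded_lipschitz (fun l => g (tau l x)).
Proof.
case=> c [K [c0 [gK gc]]]; exists (c * r), K; split; first exact: mulr_ge0.
split=> // a b; apply: le_trans (gc _ _) _.
by rewrite -mulrA ler_wpM2l.
Qed.

Lemma Uq_bounded_lipschitz g : bounded_lipschitz g -> bounded_lipschitz (Uq g).
Proof.
move=> gL; have [c [K [c0 [gK gc]]]] := gL.
have ig P y := bounded_lipschitz_integrable P (bounded_lipschitz_tau y gL).
have cr1 : 0 < c * r + 1 by rewrite ltr_wpDl // mulr_ge0.
exists (c + (c * r + 1) * t), K; split; first by rewrite addr_ge0 // mulr_ge0 // ltW.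
split=> [x|]; first exact: normr_Rintegral_le.
apply: lipschitz_of_le => x y.
have same_measure : \int[q x]_l g (tau l x) - \int[q x]_l g (tau l y) <= c * mdist x y.
  rewrite -RintegralB ?ig //; apply: Rintegral_le_cst.
    apply: eq_integrable measurableT _ _ _ (integrableB measurableT (ig _ x) (ig _ y)).
    by move=> l _ /=; rewrite EFinB.
  move=> l; apply: le_trans (ler_norm _) _; apply: le_trans (gc _ _) _.
  exact: ler_wpM2l.
have same_function :
    \int[q x]_l g (tau l y) - \int[q y]_l g (tau l y) <= (c * r + 1) * (t * mdist x y).
  apply: Rintegral_sub_le_dMK => // a b; apply: le_trans (gc _ _) _.
  apply: le_trans (ler_wpM2l c0 (tau_lipschitzL a b y)) _.
  by rewrite mulrA ler_wpM2r ?mdist_ge0 // lerDl.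
rewrite /Uq; lra.
Qed.

Lemma iter_Uq_bounded_lipschitz k g : bounded_lipschitz g ->
  bounded_lipschitz (iter k Uq g).
Proof. by elim: k => [//|k IH] /IH; rewrite iterS; exact: Uq_bounded_lipschitz. Qed.

Lemma Uq_le g y K : bounded_lipschitz g -> (forall l, g (tau l y) <= K) ->
  Uq g y <= K.
Proof.
move=> gL gK; rewrite /Uq; apply: Rintegral_le_cst => //.
exact: bounded_lipschitz_integrable (bounded_lipschitz_tau y gL).
Qed.

Lemma iter_Uq_le k g y K : bounded_lipschitz g ->
  (forall l, size l = k -> g (tau_seq tau l y) <= K) -> iter k Uq g y <= K.
Proof.
elim: k g y => [|k IH] g y gL gK; first exact: gK [::] erefl.
rewrite iterSr; apply: IH; first exact: Uq_bounded_lipschitz.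
move=> l sl; apply: Uq_le => // l0.
by have := gK (rcons l l0); rewrite size_rcons sl /tau_seq foldl_rcons; apply.
Qed.

Lemma Rintegral_Uq mu g : Tq_invariant tau q mu -> bounded_lipschitz g ->
  \int[mu]_x g x = \int[mu]_x Uq g x.
Proof.
move=> inv gL; have UgL := Uq_bounded_lipschitz gL.
apply: EFin_inj; rewrite !EFin_Rintegral ?bounded_lipschitz_integrable //.
rewrite (inv g (bounded_lipschitz_continuous gL)); apply: eq_integral => x _.
rewrite -EFin_Rintegral //.
exact: bounded_lipschitz_integrable (bounded_lipschitz_tau x gL).
Qed.

Lemma Rintegral_iter_Uq mu k g : Tq_invariant tau q mu -> bounded_lipschitz g ->
  \int[mu]_x g x = \int[mu]_x iter k Uq g x.
Proof.
move=> inv; elim: k g => [//|k IH] g gL.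
by rewrite iterSr -IH; [exact: Rintegral_Uq | exact: Uq_bounded_lipschitz].
Qed.

Section support_of_invariant_measure.
Variables (M : nat) (s : R) (A : set X) (mu : PM R X).
Hypotheses (X_compact : compact [set: X]) (s0 : 0 < s) (s1 : s < 1)
  (tau_contraction : forall l x y, size l = M ->
     mdist (tau_seq tau l x) (tau_seq tau l y) <= s * mdist x y)
  (q_full_support : forall x (U : set L), open U -> U !=set0 -> (0 < q x U)%E)
  (An : A !=set0) (A_closed : closed A) (FA : F_R tau A = A)
  (mu_invariant : Tq_invariant tau q mu).

Lemma msupport_sub_attractor : msupport mu `<=` A.
Proof.
have [D XD] := compact_mdist_bounded X_compact.
have dL := dist_set_bounded_lipschitz An XD.
have iUM := bounded_lipschitz_integrable mu (iter_Uq_bounded_lipschitz M dL).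
have idA := bounded_lipschitz_integrable mu dL.
have UM_le x : iter M Uq (dist_set A) x <= s * dist_set A x.
  apply: iter_Uq_le => // l sl.
  apply: (@dist_set_contraction _ _ A An (tau_seq tau l)) => // [a Aa|y z].
    exact: F_R_fixed_tau_seq.
  exact: tau_contraction.
have mean0 : \int[mu]_x dist_set A x = 0.
  have : \int[mu]_x dist_set A x <= s * \int[mu]_x dist_set A x.
    rewrite {1}(Rintegral_iter_Uq M) // -RintegralZl //.
    by apply: le_Rintegral => //; exact: integrable_EFinZl.
  set I := \int[mu]_x dist_set A x => IsI.
  have I0 : 0 <= I by apply: Rintegral_ge0 => x _; exact: dist_set_ge0.
  have s1' : 0 < 1 - s by rewrite subr_gt0.
  apply/eqP; rewrite eq_le I0 andbT -(pmulr_rle0 _ s1').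
  by rewrite mulrBl mul1r subr_le0.
move=> y suppy; apply: closed_dist_set_eq0 => //.
apply/eqP; rewrite eq_le (dist_set_ge0 An) andbT leNgt; apply/negP => dy0.
have := msupport_Rintegral_gt0 (bounded_lipschitz_continuous dL) idA
  (dist_set_ge0 An) suppy dy0.
by rewrite mean0 ltxx.
Qed.

Lemma msupport_tau l0 x : msupport mu x -> msupport mu (tau l0 x).
Proof.
move=> suppx U oU Uz.
have /nbhs_ballP [e /= e0 eU] : nbhs (tau l0 x) U by apply: open_nbhs_nbhs.
set z := tau l0 x in eU *.
have hL := bump_bounded_lipschitz z e.
have hUL := Uq_bounded_lipschitz hL.
have hxL := bounded_lipschitz_tau x hL.
have Uqh_x : 0 < Uq (bump z e) x.
  apply: (@msupport_Rintegral_gt0 _ _ (q x) _ l0).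
  - exact: bounded_lipschitz_continuous hxL.
  - exact: bounded_lipschitz_integrable hxL.
  - by move=> l; exact: bump_ge0.
  - by move=> V oV Vl0; apply: q_full_support => //; exists l0.
  by rewrite /= bump_center // ltW.
have : 0 < \int[mu]_w bump z e w.
  rewrite (Rintegral_Uq mu_invariant hL).
  apply: (msupport_Rintegral_gt0 _ _ _ suppx Uqh_x).
  - exact: bounded_lipschitz_continuous hUL.
  - exact: bounded_lipschitz_integrable hUL.
  by move=> w; apply: Rintegral_ge0 => l _; exact: bump_ge0.
have ballU : [set w | mdist z w < e] `<=` U by move=> w zw; apply: eU; rewrite ballEmdist.
move/lt_le_trans/(_ (Rintegral_le_indicZ (open_measurable_borel oU)
  (bounded_lipschitz_integrable mu hL) (fun w => bump_le_indic w (ltW e0) ballU))).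
rewrite pmulr_rgt0 // => muU; rewrite lt0e measure_ge0 andbT.
by apply: contraTneq muU => ->; rewrite ltxx.
Qed.

Lemma msupport_tau_seq l x : msupport mu x -> msupport mu (tau_seq tau l x).
Proof. by elim: l x => [//|l0 l IH] x /msupport_tau/IH; apply. Qed.

Lemma attractor_sub_msupport : A `<=` msupport mu.
Proof.
move=> a Aa U oU Ua.
have /nbhs_ballP [e /= e0 eU] : nbhs a U by apply: open_nbhs_nbhs.
have [x0 suppx0] := msupport_nonempty mu X_compact.
have [D XD] := compact_mdist_bounded X_compact.
have D1 : 0 < D + 1 by rewrite ltr_wpDl // (le_trans (mdist_ge0 x0 x0)).
have [N sN] : exists N, s ^+ N < e / (D + 1).
  have s1' : `|s| < 1 by rewrite ger0_norm // ltW.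
  have [N _ sN] := @cvgr_dist_lt _ _ _ _ _ _ _ (cvg_expr s1') _ (divr_gt0 e0 D1).
  exists N; have := sN N (leqnn N).
  by rewrite /= sub0r normrN ger0_norm // exprn_ge0 // ltW.
have [l [a' [sl _ ea]]] := F_R_fixed_preimage FA (N * M) Aa.
apply: (@msupport_tau_seq l x0 suppx0 _ oU); apply: eU; rewrite ballEmdist /= -ea.
apply: le_lt_trans (tau_seq_contraction (ltW s0) tau_contraction a' x0 sl) _.
rewrite ltr_pdivlMr // in sN; apply: le_lt_trans _ sN.
apply: ler_wpM2l; first by rewrite exprn_ge0 // ltW.
by rewrite (le_trans (XD a' x0)) // lerDl.
Qed.

End support_of_invariant_measure.

End dual_Markov_operator.

Theorem mainTheorem13 (R : realType) (X L : pmetricType R)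
  (tau : L -> X -> X) (q : X -> probability (borel L) R)
  (M : nat) (s r t : R) :
  compact [set: X] -> compact [set: L] ->
  continuous (fun p : L * X => tau p.1 p.2) ->
  weak_continuous q ->
  (* (W1) *)
  (forall (l : L) (x y : X), mdist (tau l x) (tau l y) <= mdist x y) ->
  (* (CP1) *)
  (1 <= M)%N -> 0 < s < 1 ->
  (forall (l : seq L) (x y : X), size l = M ->
      mdist (tau_seq tau l x) (tau_seq tau l y) <= s * mdist x y) ->
  (* (H2) *)
  0 <= r ->
  (forall (l1 l2 : L) (x : X), mdist (tau l1 x) (tau l2 x) <= r * mdist l1 l2) ->
  (* (H3) *)
  0 <= t ->
  (forall x y : X, (dMK (q x) (q y) <= (t * mdist x y)%:E)%E) ->
  (* (H4) *)
  (forall (x : X) (A : set L), open A -> A !=set0 -> (0 < q x A)%E) ->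
  s + r * M%:R * t < 1 ->
  forall (A_R : set X) (mu_R : probability (borel X) R),
    A_R !=set0 -> compact A_R -> F_R tau A_R = A_R ->
    Tq_invariant tau q mu_R ->
    msupport mu_R = A_R.
Proof.
move=> X_compact _ _ _ W1 _ /andP[s0 s1] CP r0 H2 t0 H3 H4 _ A mu An cA FA inv.
have A_closed := compact_closed (@metric_hausdorff _ X) cA.
apply/seteqP; split.
  exact: (msupport_sub_attractor r0 t0 W1 H2 H3 X_compact s0 s1 CP An A_closed FA inv).
exact: (attractor_sub_msupport r0 t0 W1 H2 H3 X_compact s0 s1 CP H4 FA inv).
Qed.
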